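(* Let $K\ge 1$, $a\in\mathbb{R}$, and $\sigma=\tanh$ applied element-wise. For parameters $\bm c,\bm w,\bm b,\bm c_p\in\mathbb{R}^K$ define, for $x\in[0,2\pi]$, $$\hat u(x)=\bm c^\top\sigma(\bm w x+\bm b)=\sum_{k=1}^K c_k\tanh(w_kx+b_k),\qquad \hat p(x)=\bm c_p^\top\sigma(\bm w x+\bm b)=\sum_{k=1}^K c_{p,k}\tanh(w_kx+b_k),$$ and the loss functionals $$\mathcal L_{\mathcal F}(\bm c,\bm w,\bm b)=\frac1{2\pi}\int_0^{2\pi}\Big(\hat u''(x)+a^2\sin(ax)\Big)^2\,dx,$$ $$\tilde{\mathcal L}_{\mathcal F}(\bm c,\bm w,\bm b,\bm c_p)=\frac1{2\pi}\int_0^{2\pi}\Big[\big(\hat p'(x)+a^2\sin(ax)\big)^2+\big(\hat p(x)-\hat u'(x)\big)^2\Big]\,dx .$$ Set $S=\sum_{l=1}^K|c_l|w_l^2+a^2$ and $T=\|\bm c_p\|_1+\sum_{l=1}^K\max(|c_l|,|c_{p,l}|)\,|w_l|+a^2$. Then there is an absolute constant $C>0$ (independent of $K$, $a$ and all parameters) such that for all parameter values and every $k=1,\dots,K$: $$\Big|\frac{\partial\mathcal L_{\mathcal F}}{\partial c_k}\Big|\le C\,S\,w_k^2,\quad \Big|\frac{\partial\mathcal L_{\mathcal F}}{\partial w_k}\Big|\le C\,S\,|c_k|\,|w_k|\,(|w_k|+1),\quad \Big|\frac{\partial\mathcal L_{\mathcal F}}{\partial b_k}\Big|\le C\,S\,|c_k|\,w_k^2,$$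 and $$\Big|\frac{\partial\tilde{\mathcal L}_{\mathcal F}}{\partial c_k}\Big|\le C\,T\,|w_k|,\quad \Big|\frac{\partial\tilde{\mathcal L}_{\mathcal F}}{\partial w_k}\Big|\le C\,T\,\max(|c_k|,|c_{p,k}|)\max(|w_k|,1),$$ $$\Big|\frac{\partial\tilde{\mathcal L}_{\mathcal F}}{\partial b_k}\Big|\le C\,T\,\max(|c_k|,|c_{p,k}|)\max(|w_k|,1),\quad \Big|\frac{\partial\tilde{\mathcal L}_{\mathcal F}}{\partial c_{p,k}}\Big|\le C\,T\,\max(|w_k|,1).$$
   Context: $\hat u'$, $\hat u''$, $\hat p'$ denote derivatives with respect to $x$. $\mathcal L_{\mathcal F}$ is the (continuous) PDE residual loss for the 1D Poisson equation $u''=-a^2\sin(ax)$ on $(0,2\pi)$, and $\tilde{\mathcal L}_{\mathcal F}$ is the PDE residual loss for the reformulated system $p'=-a^2\sin(ax)$, $p=u'$ (the ''extra field'' $p$). $\|\cdot\|_1$ is the $\ell^1$ norm on $\mathbb{R}^K$. *)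

From Stdlib Require Import Reals Lra List.
From Coquelicot Require Import Coquelicot.
Open Scope R_scope.

(* Parameter vectors in R^K are represented as functions nat -> R, with
   entries indexed by 0..K-1 (paper's index k corresponds to k-1). *)
Definition vsum (K : nat) (f : nat -> R) : R :=
  fold_right Rplus 0 (map f (seq 0 K)).

Definition upd (v : nat -> R) (k : nat) (t : R) : nat -> R :=
  fun j => if Nat.eqb j k then t else v j.

Definition uhat (K : nat) (c w b : nat -> R) (x : R) : R :=
  vsum K (fun k => c k * tanh (w k * x + b k)).

Definition LF (K : nat) (a : R) (c w b : nat -> R) : R :=
  / (2 * PI) * RInt (fun x => (Derive_n (uhat K c w b) 2 x + a ^ 2 * sin (a * x)) ^ 2)
                    0 (2 * PI).

Definition LFt (K : nat) (a : R) (c w b cp : nat -> R) : R :=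
  / (2 * PI) * RInt (fun x =>
       (Derive (uhat K cp w b) x + a ^ 2 * sin (a * x)) ^ 2
     + (uhat K cp w b x - Derive (uhat K c w b) x) ^ 2)
     0 (2 * PI).

Definition Sconst (K : nat) (a : R) (c w : nat -> R) : R :=
  vsum K (fun l => Rabs (c l) * w l ^ 2) + a ^ 2.

Definition Tconst (K : nat) (a : R) (c w cp : nat -> R) : R :=
  vsum K (fun l => Rabs (cp l))
  + vsum K (fun l => Rmax (Rabs (c l)) (Rabs (cp l)) * Rabs (w l)) + a ^ 2.

Definition dbound (F : R -> R) (t0 B : R) : Prop :=
  ex_derive F t0 /\ Rabs (Derive F t0) <= B.

From Stdlib Require Import Reals Lra Lia List FunctionalExtensionality.
From Coquelicot Require Import Coquelicot.
Open Scope R_scope.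

(** The partial derivative of either loss in one parameter is the mean over
    [[0, 2 PI]] of [2 * residual * (derivative of the residual in that
    parameter)]; the integrand is jointly continuous, so one may differentiate
    under the integral sign. The derivatives of [tanh] up to order three are
    polynomials in [tanh] bounded by 2, so the residuals are bounded by [2 S]
    resp. [2 T], and the parameter derivative of a single neuron
    [c_k w_k^n tanh^(n) (w_k x + b_k)] is bounded by the monomials in [|c_k|],
    [|w_k|] of the claim, since [|x| <= 2 PI <= 8]. *)

(* [is_derive_const] states the derivative as the abstract [zero], which does
   not unify with the real [0]. *)
Lemma is_derive_Rconst (e t : R) : is_derive (fun _ => e) t 0.
Proof. apply is_derive_Reals, derivable_pt_lim_const. Qed.

(** * Derivatives of tanh *)

Lemma cosh_pos x : 0 < cosh x.
Proof. unfold cosh. pose proof (exp_pos x); pose proof (exp_pos (- x)); lra. Qed.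

Lemma Rabs_tanh_le_1 x : Rabs (tanh x) <= 1.
Proof.
  pose proof (cosh_pos x) as Hc.
  assert (Hs : Rabs (sinh x) <= cosh x).
  { unfold sinh, cosh. pose proof (exp_pos x); pose proof (exp_pos (- x)).
    apply Rabs_le; lra. }
  unfold tanh. rewrite Rabs_div, (Rabs_right (cosh x)) by lra.
  apply Rmult_le_reg_r with (cosh x); [exact Hc|]. field_simplify; lra.
Qed.

Lemma is_derive_tanh x : is_derive tanh x (1 - tanh x ^ 2).
Proof.
  pose proof (cosh_pos x) as Hc.
  replace (1 - tanh x ^ 2) with ((cosh x * cosh x - sinh x * sinh x) / cosh x ^ 2)
    by (unfold tanh; field; lra).
  apply is_derive_div; [| |lra]; apply is_derive_Reals.
  - apply derivable_pt_lim_sinh.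
  - apply derivable_pt_lim_cosh.
Qed.

Lemma Derive_tanh x : Derive tanh x = 1 - tanh x ^ 2.
Proof. apply is_derive_unique, is_derive_tanh. Qed.

(** [dtanh n] is the [n]-th derivative of [tanh] for [n <= 3], written as a
    polynomial in [tanh]; it is [0] beyond order 3. *)
Definition dtanh (n : nat) (z : R) : R :=
  match n with
  | 0 => tanh z
  | 1 => 1 - tanh z ^ 2
  | 2 => -2 * tanh z * (1 - tanh z ^ 2)
  | 3 => (-2 + 6 * tanh z ^ 2) * (1 - tanh z ^ 2)
  | _ => 0
  end.

Ltac derive_tanh_poly :=
  auto_derive; [repeat split; eexists; apply is_derive_tanh|];
  rewrite ?Derive_tanh; ring.

Lemma is_derive_dtanh n z : (n < 3)%nat -> is_derive (dtanh n) z (dtanh (S n) z).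
Proof.
  intros Hn. destruct n as [|[|[|n]]]; [| | |lia]; unfold dtanh.
  - apply is_derive_tanh.
  - derive_tanh_poly.
  - derive_tanh_poly.
Qed.

Lemma Derive_dtanh n z : (n < 3)%nat -> Derive (dtanh n) z = dtanh (S n) z.
Proof. intros Hn. apply is_derive_unique, is_derive_dtanh, Hn. Qed.

Lemma ex_derive_dtanh n z : ex_derive (dtanh n) z.
Proof.
  destruct (Nat.ltb_spec n 3) as [Hn|Hn].
  - eexists. apply is_derive_dtanh, Hn.
  - destruct n as [|[|[|[|n]]]]; try lia; unfold dtanh.
    + auto_derive. repeat split; eexists; apply is_derive_tanh.
    + apply ex_derive_const.
Qed.

Lemma Rabs_dtanh_le n z : Rabs (dtanh n z) <= 2.
Proof.
  pose proof (Rabs_tanh_le_1 z) as Hy. apply Rabs_le_between in Hy.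
  assert (Hy2 : 0 <= tanh z ^ 2 <= 1) by (split; nra).
  destruct n as [|[|[|[|n]]]]; unfold dtanh; set (y := tanh z) in *;
    apply Rabs_le; split; nra.
Qed.

Lemma continuous_of_continuity_2d_pt (f : R -> R -> R) t x :
  continuity_2d_pt f t x -> continuous (f t) x.
Proof.
  intros H. apply continuity_pt_filterlim.
  intros eps Heps. destruct (H (mkposreal eps Heps)) as [d Hd].
  exists d. split; [apply cond_pos|]. intros y [_ Hy]. simpl in *. unfold R_dist in *.
  apply Hd; [|exact Hy]. rewrite Rminus_eq_0, Rabs_R0. apply cond_pos.
Qed.

Lemma continuity_2d_pt_dtanh n (f : R -> R -> R) t x :
  continuity_2d_pt f t x -> continuity_2d_pt (fun u v => dtanh n (f u v)) t x.
Proof.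
  intros H. apply continuity_1d_2d_pt_comp; [|exact H].
  apply continuity_pt_filterlim, (ex_derive_continuous (dtanh n)), ex_derive_dtanh.
Qed.

Lemma continuity_2d_pt_sin (f : R -> R -> R) t x :
  continuity_2d_pt f t x -> continuity_2d_pt (fun u v => sin (f u v)) t x.
Proof. intros H. apply continuity_1d_2d_pt_comp; [apply continuity_sin|exact H]. Qed.

Lemma continuity_2d_pt_pow (f : R -> R -> R) n t x :
  continuity_2d_pt f t x -> continuity_2d_pt (fun u v => f u v ^ n) t x.
Proof.
  intros H. induction n as [|n IH]; simpl.
  - apply continuity_2d_pt_const.
  - apply (continuity_2d_pt_mult f (fun u v => f u v ^ n)); assumption.
Qed.

Lemma continuity_2d_pt_upd v k l t x : continuity_2d_pt (fun u (_ : R) => upd v k u l) t x.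
Proof.
  unfold upd. destruct (Nat.eqb l k).
  - apply continuity_2d_pt_id1.
  - apply continuity_2d_pt_const.
Qed.

Lemma continuity_2d_pt_vsum K (F : nat -> R -> R -> R) t x :
  (forall l, continuity_2d_pt (F l) t x) ->
  continuity_2d_pt (fun u v => vsum K (fun l => F l u v)) t x.
Proof.
  intros H. unfold vsum. induction (seq 0 K) as [|l L IH]; simpl.
  - apply continuity_2d_pt_const.
  - apply (continuity_2d_pt_plus (F l)); [apply H|exact IH].
Qed.

Lemma is_derive_vsum K (F : nat -> R -> R) (dF : nat -> R) t :
  (forall l, is_derive (F l) t (dF l)) ->
  is_derive (fun s => vsum K (fun l => F l s)) t (vsum K dF).
Proof.
  intros H. unfold vsum. induction (seq 0 K) as [|l L IH]; simpl.
  - apply is_derive_Rconst.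
  - apply (is_derive_plus (F l)); [apply H|exact IH].
Qed.

Lemma Rabs_vsum_le K f g : (forall l, Rabs (f l) <= g l) -> Rabs (vsum K f) <= vsum K g.
Proof.
  intros H. unfold vsum. induction (seq 0 K) as [|l L IH]; simpl.
  - rewrite Rabs_R0; lra.
  - eapply Rle_trans; [apply Rabs_triang|]. specialize (H l). lra.
Qed.

Lemma vsum_ext K f g : (forall l, f l = g l) -> vsum K f = vsum K g.
Proof. intros H. unfold vsum. f_equal. apply map_ext, H. Qed.

Lemma vsum_le K f g : (forall l, f l <= g l) -> vsum K f <= vsum K g.
Proof.
  intros H. unfold vsum. induction (seq 0 K) as [|l L IH]; simpl; [lra|].
  specialize (H l). lra.
Qed.

Lemma vsum_nonneg K f : (forall l, 0 <= f l) -> 0 <= vsum K f.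
Proof.
  intros H. unfold vsum. induction (seq 0 K) as [|l L IH]; simpl; [lra|].
  specialize (H l). lra.
Qed.

Lemma vsum_scal K r f : vsum K (fun l => r * f l) = r * vsum K f.
Proof. unfold vsum. induction (seq 0 K) as [|l L IH]; simpl; [ring|]. rewrite IH. ring. Qed.

Lemma vsum_delta K k d : (k < K)%nat -> vsum K (fun l => if Nat.eqb l k then d else 0) = d.
Proof.
  intros Hk. unfold vsum.
  assert (Hzero : forall s n, (k < s)%nat ->
            fold_right Rplus 0 (map (fun l => if Nat.eqb l k then d else 0) (seq s n)) = 0).
  { intros s n. revert s. induction n as [|n IH]; intros s Hs; simpl; [reflexivity|].
    rewrite IH by lia. destruct (Nat.eqb_spec s k); [lia|lra]. }
  assert (Hd : forall n s, (s <= k < s + n)%nat ->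
            fold_right Rplus 0 (map (fun l => if Nat.eqb l k then d else 0) (seq s n)) = d).
  { induction n as [|n IH]; intros s Hs; simpl; [lia|].
    destruct (Nat.eqb_spec s k).
    - rewrite Hzero by lia. lra.
    - rewrite IH by lia. lra. }
  apply Hd. lia.
Qed.

Lemma upd_same v k : upd v k (v k) = v.
Proof.
  apply functional_extensionality. intros j. unfold upd.
  destruct (Nat.eqb_spec j k) as [->|_]; reflexivity.
Qed.

Lemma is_derive_vsum_upd K k (phi : nat -> R -> R) v t d : (k < K)%nat ->
  is_derive (phi k) t d ->
  is_derive (fun s => vsum K (fun l => phi l (upd v k s l))) t d.
Proof.
  intros Hk Hd. rewrite <- (vsum_delta K k d Hk).
  apply is_derive_vsum. intros l. unfold upd.
  destruct (Nat.eqb_spec l k) as [->|_]; [exact Hd|apply is_derive_Rconst].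
Qed.

(** * Derivatives of the network *)

Definition uhatD (n K : nat) (c w b : nat -> R) (x : R) : R :=
  vsum K (fun l => c l * w l ^ n * dtanh n (w l * x + b l)).

Lemma uhat_uhatD0 K c w b : uhat K c w b = uhatD 0 K c w b.
Proof.
  apply functional_extensionality. intros x. apply vsum_ext. intros l. simpl. ring.
Qed.

Lemma is_derive_uhatD n K c w b x : (n < 3)%nat ->
  is_derive (uhatD n K c w b) x (uhatD (S n) K c w b x).
Proof.
  intros Hn. unfold uhatD at 2.
  apply (is_derive_vsum K (fun l y => c l * w l ^ n * dtanh n (w l * y + b l))). intros l.
  auto_derive; [apply ex_derive_dtanh|].
  rewrite Derive_dtanh, <- tech_pow_Rmult by exact Hn. ring.
Qed.

Lemma Derive_uhatD n K c w b : (n < 3)%nat -> Derive (uhatD n K c w b) = uhatD (S n) K c w b.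
Proof.
  intros Hn. apply functional_extensionality. intros x.
  apply is_derive_unique, is_derive_uhatD, Hn.
Qed.

Lemma LF_uhatD K a c w b : LF K a c w b =
  / (2 * PI) * RInt (fun x => (uhatD 2 K c w b x + a ^ 2 * sin (a * x)) ^ 2) 0 (2 * PI).
Proof.
  unfold LF. f_equal. apply RInt_ext. intros x _. simpl.
  rewrite uhat_uhatD0, !Derive_uhatD by lia. reflexivity.
Qed.

Lemma LFt_uhatD K a c w b cp : LFt K a c w b cp =
  / (2 * PI) * RInt (fun x => (uhatD 1 K cp w b x + a ^ 2 * sin (a * x)) ^ 2
      + (uhatD 0 K cp w b x - uhatD 1 K c w b x) ^ 2) 0 (2 * PI).
Proof.
  unfold LFt. f_equal. apply RInt_ext. intros x _.
  rewrite !uhat_uhatD0, !Derive_uhatD by lia. reflexivity.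
Qed.

Lemma is_derive_uhatD_c n K k c w b x t : (k < K)%nat ->
  is_derive (fun s => uhatD n K (upd c k s) w b x) t (w k ^ n * dtanh n (w k * x + b k)).
Proof.
  intros Hk. apply (is_derive_vsum_upd K k (fun l y => y * w l ^ n * dtanh n (w l * x + b l)));
    [exact Hk|].
  auto_derive; [exact I|ring].
Qed.

Lemma is_derive_uhatD_w n K k c w b x t : (n < 3)%nat -> (k < K)%nat ->
  is_derive (fun s => uhatD n K c (upd w k s) b x) t
    (c k * (INR n * t ^ pred n * dtanh n (t * x + b k) + t ^ n * x * dtanh (S n) (t * x + b k))).
Proof.
  intros Hn Hk. apply (is_derive_vsum_upd K k (fun l y => c l * y ^ n * dtanh n (y * x + b l)));
    [exact Hk|].
  auto_derive; [apply ex_derive_dtanh|]. rewrite Derive_dtanh by exact Hn. ring.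
Qed.

Lemma is_derive_uhatD_b n K k c w b x t : (n < 3)%nat -> (k < K)%nat ->
  is_derive (fun s => uhatD n K c w (upd b k s) x) t (c k * w k ^ n * dtanh (S n) (w k * x + t)).
Proof.
  intros Hn Hk. apply (is_derive_vsum_upd K k (fun l y => c l * w l ^ n * dtanh n (w l * x + y)));
    [exact Hk|].
  auto_derive; [apply ex_derive_dtanh|]. rewrite Derive_dtanh by exact Hn. ring.
Qed.

Lemma dbound_ext F G t0 B : (forall t, F t = G t) -> dbound G t0 B -> dbound F t0 B.
Proof.
  intros H [HG HB]. split.
  - eapply ex_derive_ext; [|exact HG]. intros t. symmetry. apply H.
  - rewrite (Derive_ext F G); [exact HB|exact H].
Qed.

Lemma dbound_le F t0 B B' : B <= B' -> dbound F t0 B -> dbound F t0 B'.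
Proof. intros H [Hex HB]. split; [exact Hex|lra]. Qed.

Lemma dbound_mean_param (f df : R -> R -> R) t0 B :
  (forall t x, is_derive (fun s => f s x) t (df t x)) ->
  (forall t x, continuity_2d_pt f t x) ->
  (forall t x, continuity_2d_pt df t x) ->
  (forall x, 0 <= x <= 2 * PI -> Rabs (df t0 x) <= B) ->
  dbound (fun t => / (2 * PI) * RInt (f t) 0 (2 * PI)) t0 B.
Proof.
  intros Hd Hc Hdc HB. pose proof PI_RGT_0 as Hpi.
  change (dbound (fun t => / (2 * PI) * RInt (fun x => f t x) 0 (2 * PI)) t0 B).
  assert (Hint : forall g : R -> R -> R, (forall t x, continuity_2d_pt g t x) ->
                   forall t, ex_RInt (g t) 0 (2 * PI)).
  { intros g Hg t. apply (@ex_RInt_continuous R_CompleteNormedModule).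
    intros x _. apply continuous_of_continuity_2d_pt, Hg. }
  assert (HI : is_derive (fun t => RInt (fun x => f t x) 0 (2 * PI)) t0 (RInt (df t0) 0 (2 * PI))).
  { replace (RInt (df t0) 0 (2 * PI)) with (RInt (fun x => Derive (fun u => f u x) t0) 0 (2 * PI))
      by (apply RInt_ext; intros x _; apply is_derive_unique, Hd).
    apply is_derive_RInt_param.
    - apply filter_forall. intros t x _. eexists. apply Hd.
    - intros x _. eapply continuity_2d_pt_ext; [|apply (Hdc t0 x)].
      intros u v. symmetry. apply is_derive_unique, Hd.
    - apply filter_forall. exact (Hint f Hc). }
  apply (is_derive_scal _ _ (/ (2 * PI))) in HI.
  split; [eexists; exact HI|].
  rewrite (is_derive_unique _ _ _ HI), Rabs_mult, Rabs_right
    by (apply Rle_ge, Rlt_le, Rinv_0_lt_compat; lra).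
  apply Rle_trans with (/ (2 * PI) * ((2 * PI - 0) * B)); [|right; field; lra].
  apply Rmult_le_compat_l; [apply Rlt_le, Rinv_0_lt_compat; lra|].
  apply abs_RInt_le_const; [lra|exact (Hint df Hdc t0)|exact HB].
Qed.

Lemma is_derive_sq (g : R -> R) t dg : is_derive g t dg ->
  is_derive (fun s => g s ^ 2) t (2 * g t * dg).
Proof.
  intros H. replace (2 * g t * dg) with (INR 2 * dg * g t ^ pred 2) by (simpl; ring).
  apply is_derive_pow, H.
Qed.

Ltac solve_continuity_2d :=
  unfold uhatD; cbv beta;
  repeat first
    [ apply continuity_2d_pt_const | apply continuity_2d_pt_id1 | apply continuity_2d_pt_id2
    | apply continuity_2d_pt_upd | apply continuity_2d_pt_dtanh | apply continuity_2d_pt_sin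
    | apply continuity_2d_pt_pow | apply continuity_2d_pt_plus | apply continuity_2d_pt_minus
    | apply continuity_2d_pt_mult | apply continuity_2d_pt_opp
    | apply continuity_2d_pt_vsum; intro ].

(** * Pointwise bounds *)

Lemma Rabs_mult_le x y X Y : Rabs x <= X -> Rabs y <= Y -> Rabs (x * y) <= X * Y.
Proof. intros Hx Hy. rewrite Rabs_mult. apply Rmult_le_compat; auto using Rabs_pos. Qed.

Lemma Rabs_uhatD_le n K c w b x :
  Rabs (uhatD n K c w b x) <= 2 * vsum K (fun l => Rabs (c l) * Rabs (w l) ^ n).
Proof.
  unfold uhatD. rewrite <- vsum_scal. apply Rabs_vsum_le. intros l.
  rewrite Rmult_comm, RPow_abs, <- Rabs_mult.
  apply Rabs_mult_le; [apply Rabs_dtanh_le|lra].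
Qed.

Lemma Rabs_forcing_le a x : Rabs (a ^ 2 * sin (a * x)) <= a ^ 2.
Proof.
  rewrite <- (Rmult_1_r (a ^ 2)) at 2. rewrite <- (Rabs_right (a ^ 2)) at 2
    by (apply Rle_ge, pow2_ge_0).
  apply Rabs_mult_le; [lra|]. apply Rabs_le, SIN_bound.
Qed.

Lemma Rabs_LF_residual_le K a c w b x :
  Rabs (uhatD 2 K c w b x + a ^ 2 * sin (a * x)) <= 2 * Sconst K a c w.
Proof.
  eapply Rle_trans; [apply Rabs_triang|].
  pose proof (Rabs_uhatD_le 2 K c w b x) as Hu. pose proof (Rabs_forcing_le a x).
  pose proof (pow2_ge_0 a).
  rewrite (vsum_ext K _ (fun l => Rabs (c l) * w l ^ 2)) in Hu
    by (intros l; rewrite pow2_abs; ring).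
  unfold Sconst. lra.
Qed.

Lemma Tconst_bounds K a c w cp :
  0 <= vsum K (fun l => Rabs (cp l)) /\
  vsum K (fun l => Rabs (cp l) * Rabs (w l))
    <= vsum K (fun l => Rmax (Rabs (c l)) (Rabs (cp l)) * Rabs (w l)) /\
  vsum K (fun l => Rabs (c l) * Rabs (w l))
    <= vsum K (fun l => Rmax (Rabs (c l)) (Rabs (cp l)) * Rabs (w l)) /\
  0 <= a ^ 2.
Proof.
  repeat split.
  - apply vsum_nonneg. intros l. apply Rabs_pos.
  - apply vsum_le. intros l. apply Rmult_le_compat_r; [apply Rabs_pos|apply Rmax_r].
  - apply vsum_le. intros l. apply Rmult_le_compat_r; [apply Rabs_pos|apply Rmax_l].
  - apply pow2_ge_0.
Qed.

Lemma Rabs_LFt_pde_residual_le K a c w b cp x :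
  Rabs (uhatD 1 K cp w b x + a ^ 2 * sin (a * x)) <= 2 * Tconst K a c w cp.
Proof.
  eapply Rle_trans; [apply Rabs_triang|].
  pose proof (Rabs_uhatD_le 1 K cp w b x) as Hu. pose proof (Rabs_forcing_le a x).
  pose proof (Tconst_bounds K a c w cp).
  rewrite (vsum_ext K _ (fun l => Rabs (cp l) * Rabs (w l))) in Hu by (intros l; ring).
  unfold Tconst. lra.
Qed.

Lemma Rabs_LFt_flux_residual_le K a c w b cp x :
  Rabs (uhatD 0 K cp w b x - uhatD 1 K c w b x) <= 2 * Tconst K a c w cp.
Proof.
  unfold Rminus. eapply Rle_trans; [apply Rabs_triang|]. rewrite Rabs_Ropp.
  pose proof (Rabs_uhatD_le 0 K cp w b x) as Hp. pose proof (Rabs_uhatD_le 1 K c w b x) as Hu.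
  pose proof (Tconst_bounds K a c w cp).
  rewrite (vsum_ext K _ (fun l => Rabs (cp l))) in Hp by (intros l; ring).
  rewrite (vsum_ext K _ (fun l => Rabs (c l) * Rabs (w l))) in Hu by (intros l; ring).
  unfold Tconst. lra.
Qed.

Lemma Sconst_nonneg K a c w : 0 <= Sconst K a c w.
Proof.
  unfold Sconst. pose proof (pow2_ge_0 a).
  assert (0 <= vsum K (fun l => Rabs (c l) * w l ^ 2)).
  { apply vsum_nonneg. intros l. apply Rmult_le_pos; [apply Rabs_pos|apply pow2_ge_0]. }
  lra.
Qed.

Lemma Tconst_nonneg K a c w cp : 0 <= Tconst K a c w cp.
Proof.
  unfold Tconst. pose proof (Tconst_bounds K a c w cp).
  assert (0 <= vsum K (fun l => Rabs (c l) * Rabs (w l))).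
  { apply vsum_nonneg. intros l. apply Rmult_le_pos; apply Rabs_pos. }
  lra.
Qed.

Lemma Rabs_pow_dtanh_le n m t z : Rabs (t ^ n * dtanh m z) <= Rabs t ^ n * 2.
Proof. apply Rabs_mult_le; [rewrite RPow_abs; lra|apply Rabs_dtanh_le]. Qed.

Lemma Rabs_scaled_pow_dtanh_le n m r t z :
  Rabs (r * t ^ n * dtanh m z) <= Rabs r * (Rabs t ^ n * 2).
Proof. rewrite Rmult_assoc. apply Rabs_mult_le; [lra|apply Rabs_pow_dtanh_le]. Qed.

Lemma Rabs_neuron_dw_le n r t z x : 0 <= x <= 2 * PI ->
  Rabs (r * (INR n * t ^ pred n * dtanh n z + t ^ n * x * dtanh (S n) z))
  <= Rabs r * (INR n * Rabs t ^ pred n * 2 + Rabs t ^ n * 8 * 2).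
Proof.
  intros Hx. pose proof PI_4.
  apply Rabs_mult_le; [lra|]. eapply Rle_trans; [apply Rabs_triang|].
  apply Rplus_le_compat; apply Rabs_mult_le; try apply Rabs_dtanh_le; apply Rabs_mult_le;
    rewrite ?RPow_abs; try lra.
  - rewrite Rabs_right; [lra|apply Rle_ge, pos_INR].
  - rewrite Rabs_right; lra.
Qed.

Section LossPaths.

Variables (K : nat) (a : R) (c w b cp : R -> nat -> R) (t0 : R).

Lemma dbound_LF_path (D : R -> R -> R) B :
  (forall t x, is_derive (fun s => uhatD 2 K (c s) (w s) (b s) x) t (D t x)) ->
  (forall t x, continuity_2d_pt (fun s y => uhatD 2 K (c s) (w s) (b s) y) t x) ->
  (forall t x, continuity_2d_pt D t x) ->
  (forall x, 0 <= x <= 2 * PI -> Rabs (D t0 x) <= B) ->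
  dbound (fun t => LF K a (c t) (w t) (b t)) t0 (4 * Sconst K a (c t0) (w t0) * B).
Proof.
  intros Hd Hc HDc HB.
  pose (P t x := uhatD 2 K (c t) (w t) (b t) x + a ^ 2 * sin (a * x)).
  assert (HcP : forall t x, continuity_2d_pt P t x).
  { intros t x. apply continuity_2d_pt_plus; [apply Hc|solve_continuity_2d]. }
  eapply dbound_ext; [intros t; apply LF_uhatD|].
  apply (dbound_mean_param (fun t x => P t x ^ 2) (fun t x => 2 * P t x * D t x)).
  - intros t x. apply (is_derive_sq (fun s => P s x)). rewrite <- (Rplus_0_r (D t x)).
    apply (is_derive_plus (fun s => uhatD 2 K (c s) (w s) (b s) x) (fun _ => a ^ 2 * sin (a * x)));
      [apply Hd|apply is_derive_Rconst].
  - intros t x. apply continuity_2d_pt_pow, HcP.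
  - intros t x. apply continuity_2d_pt_mult; auto.
    apply continuity_2d_pt_mult; auto. apply continuity_2d_pt_const.
  - intros x Hx. replace (4 * Sconst K a (c t0) (w t0) * B)
      with (2 * (2 * Sconst K a (c t0) (w t0)) * B) by ring.
    apply Rabs_mult_le; [apply Rabs_mult_le|apply HB, Hx].
    + rewrite Rabs_right; lra.
    + apply Rabs_LF_residual_le.
Qed.

Lemma dbound_LFt_path (D1 D2 : R -> R -> R) B1 B2 :
  (forall t x, is_derive (fun s => uhatD 1 K (cp s) (w s) (b s) x) t (D1 t x)) ->
  (forall t x, is_derive (fun s => uhatD 0 K (cp s) (w s) (b s) x - uhatD 1 K (c s) (w s) (b s) x)
                 t (D2 t x)) ->
  (forall t x, continuity_2d_pt (fun s y => uhatD 1 K (cp s) (w s) (b s) y) t x) ->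
  (forall t x, continuity_2d_pt
                 (fun s y => uhatD 0 K (cp s) (w s) (b s) y - uhatD 1 K (c s) (w s) (b s) y) t x) ->
  (forall t x, continuity_2d_pt D1 t x) ->
  (forall t x, continuity_2d_pt D2 t x) ->
  (forall x, 0 <= x <= 2 * PI -> Rabs (D1 t0 x) <= B1) ->
  (forall x, 0 <= x <= 2 * PI -> Rabs (D2 t0 x) <= B2) ->
  dbound (fun t => LFt K a (c t) (w t) (b t) (cp t)) t0
    (4 * Tconst K a (c t0) (w t0) (cp t0) * (B1 + B2)).
Proof.
  intros Hd1 Hd2 Hc1 Hc2 HDc1 HDc2 HB1 HB2.
  pose (P t x := uhatD 1 K (cp t) (w t) (b t) x + a ^ 2 * sin (a * x)).
  pose (Q t x := uhatD 0 K (cp t) (w t) (b t) x - uhatD 1 K (c t) (w t) (b t) x).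
  assert (HcP : forall t x, continuity_2d_pt P t x).
  { intros t x. apply continuity_2d_pt_plus; [apply Hc1|solve_continuity_2d]. }
  eapply dbound_ext; [intros t; apply LFt_uhatD|].
  apply (dbound_mean_param (fun t x => P t x ^ 2 + Q t x ^ 2)
    (fun t x => 2 * P t x * D1 t x + 2 * Q t x * D2 t x)).
  - intros t x. apply (is_derive_plus (fun s => P s x ^ 2) (fun s => Q s x ^ 2)).
    + apply (is_derive_sq (fun s => P s x)). rewrite <- (Rplus_0_r (D1 t x)).
      apply (is_derive_plus (fun s => uhatD 1 K (cp s) (w s) (b s) x)
        (fun _ => a ^ 2 * sin (a * x)));
        [apply Hd1|apply is_derive_Rconst].
    + apply (is_derive_sq (fun s => Q s x)), Hd2.
  - intros t x. apply continuity_2d_pt_plus; apply continuity_2d_pt_pow; [apply HcP|apply Hc2].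
  - intros t x. apply continuity_2d_pt_plus; apply continuity_2d_pt_mult; auto;
      apply continuity_2d_pt_mult; auto; apply continuity_2d_pt_const.
  - intros x Hx. set (T := Tconst K a (c t0) (w t0) (cp t0)).
    replace (4 * T * (B1 + B2)) with (2 * (2 * T) * B1 + 2 * (2 * T) * B2) by ring.
    assert (H2 : Rabs 2 <= 2) by (rewrite Rabs_right; lra).
    eapply Rle_trans; [apply Rabs_triang|]. apply Rplus_le_compat;
      (apply Rabs_mult_le; [apply Rabs_mult_le; [exact H2|]|auto]).
    + apply Rabs_LFt_pde_residual_le.
    + apply Rabs_LFt_flux_residual_le.
Qed.

End LossPaths.

(** * The seven partial derivatives *)

Lemma dbound_LF_c K a c w b k : (k < K)%nat ->
  dbound (fun t => LF K a (upd c k t) w b) (c k) (8 * Sconst K a c w * w k ^ 2).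
Proof.
  intros Hk.
  eapply dbound_le; [|apply (dbound_LF_path K a (upd c k) (fun _ => w) (fun _ => b) (c k)
    (fun _ x => w k ^ 2 * dtanh 2 (w k * x + b k)) (Rabs (w k) ^ 2 * 2))].
  - rewrite upd_same, pow2_abs. right; ring.
  - intros t x. apply is_derive_uhatD_c, Hk.
  - intros t x. solve_continuity_2d.
  - intros t x. solve_continuity_2d.
  - intros x _. apply Rabs_pow_dtanh_le.
Qed.

Lemma dbound_LF_w K a c w b k : (k < K)%nat ->
  dbound (fun t => LF K a c (upd w k t) b) (w k)
    (64 * Sconst K a c w * Rabs (c k) * Rabs (w k) * (Rabs (w k) + 1)).
Proof.
  intros Hk.
  eapply dbound_le; [|apply (dbound_LF_path K a (fun _ => c) (upd w k) (fun _ => b) (w k)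
    (fun t x => c k * (INR 2 * t ^ pred 2 * dtanh 2 (t * x + b k)
                       + t ^ 2 * x * dtanh 3 (t * x + b k)))
    (Rabs (c k) * (INR 2 * Rabs (w k) ^ pred 2 * 2 + Rabs (w k) ^ 2 * 8 * 2)))].
  - rewrite upd_same. simpl. pose proof (Sconst_nonneg K a c w).
    pose proof (Rabs_pos (c k)). pose proof (Rabs_pos (w k)).
    assert (0 <= Sconst K a c w * Rabs (c k) * Rabs (w k)) by (apply Rmult_le_pos; nra).
    nra.
  - intros t x. apply is_derive_uhatD_w; [lia|exact Hk].
  - intros t x. solve_continuity_2d.
  - intros t x. solve_continuity_2d.
  - intros x Hx. apply Rabs_neuron_dw_le, Hx.
Qed.

Lemma dbound_LF_b K a c w b k : (k < K)%nat ->
  dbound (fun t => LF K a c w (upd b k t)) (b k) (8 * Sconst K a c w * Rabs (c k) * w k ^ 2).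
Proof.
  intros Hk.
  eapply dbound_le; [|apply (dbound_LF_path K a (fun _ => c) (fun _ => w) (upd b k) (b k)
    (fun t x => c k * w k ^ 2 * dtanh 3 (w k * x + t)) (Rabs (c k) * (Rabs (w k) ^ 2 * 2)))].
  - rewrite pow2_abs. right; ring.
  - intros t x. apply is_derive_uhatD_b; [lia|exact Hk].
  - intros t x. solve_continuity_2d.
  - intros t x. solve_continuity_2d.
  - intros x _. apply Rabs_scaled_pow_dtanh_le.
Qed.

Lemma dbound_LFt_c K a c w b cp k : (k < K)%nat ->
  dbound (fun t => LFt K a (upd c k t) w b cp) (c k) (8 * Tconst K a c w cp * Rabs (w k)).
Proof.
  intros Hk.
  eapply dbound_le; [|apply (dbound_LFt_path K a (upd c k) (fun _ => w) (fun _ => b) (fun _ => cp)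
    (c k) (fun _ _ => 0) (fun _ x => 0 - w k ^ 1 * dtanh 1 (w k * x + b k))
    0 (Rabs (w k) ^ 1 * 2))].
  - rewrite upd_same. simpl. right; ring.
  - intros t x. apply is_derive_Rconst.
  - intros t x. apply (is_derive_minus (fun _ => uhatD 0 K cp w b x)
      (fun s => uhatD 1 K (upd c k s) w b x)); [apply is_derive_Rconst|apply is_derive_uhatD_c, Hk].
  - intros t x. solve_continuity_2d.
  - intros t x. solve_continuity_2d.
  - intros t x. solve_continuity_2d.
  - intros t x. solve_continuity_2d.
  - intros x _. rewrite Rabs_R0. lra.
  - intros x _. rewrite Rminus_0_l, Rabs_Ropp. apply Rabs_pow_dtanh_le.
Qed.

Lemma dbound_LFt_cp K a c w b cp k : (k < K)%nat ->
  dbound (fun t => LFt K a c w b (upd cp k t)) (cp k)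
    (16 * Tconst K a c w cp * Rmax (Rabs (w k)) 1).
Proof.
  intros Hk.
  eapply dbound_le; [|apply (dbound_LFt_path K a (fun _ => c) (fun _ => w) (fun _ => b) (upd cp k)
    (cp k) (fun _ x => w k ^ 1 * dtanh 1 (w k * x + b k))
    (fun _ x => w k ^ 0 * dtanh 0 (w k * x + b k) - 0)
    (Rabs (w k) ^ 1 * 2) (Rabs (w k) ^ 0 * 2))].
  - rewrite upd_same. simpl. pose proof (Tconst_nonneg K a c w cp).
    pose proof (Rmax_l (Rabs (w k)) 1). pose proof (Rmax_r (Rabs (w k)) 1). nra.
  - intros t x. apply is_derive_uhatD_c, Hk.
  - intros t x. apply (is_derive_minus (fun s => uhatD 0 K (upd cp k s) w b x)
      (fun _ => uhatD 1 K c w b x)); [apply is_derive_uhatD_c, Hk|apply is_derive_Rconst].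
  - intros t x. solve_continuity_2d.
  - intros t x. solve_continuity_2d.
  - intros t x. solve_continuity_2d.
  - intros t x. solve_continuity_2d.
  - intros x _. apply Rabs_pow_dtanh_le.
  - intros x _. rewrite Rminus_0_r. apply Rabs_pow_dtanh_le.
Qed.

Lemma dbound_LFt_w K a c w b cp k : (k < K)%nat ->
  dbound (fun t => LFt K a c (upd w k t) b cp) (w k)
    (208 * Tconst K a c w cp * Rmax (Rabs (c k)) (Rabs (cp k)) * Rmax (Rabs (w k)) 1).
Proof.
  intros Hk.
  eapply dbound_le; [|apply (dbound_LFt_path K a (fun _ => c) (upd w k) (fun _ => b) (fun _ => cp)
    (w k)
    (fun t x => cp k * (INR 1 * t ^ pred 1 * dtanh 1 (t * x + b k)
                        + t ^ 1 * x * dtanh 2 (t * x + b k)))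
    (fun t x => cp k * (INR 0 * t ^ pred 0 * dtanh 0 (t * x + b k)
                        + t ^ 0 * x * dtanh 1 (t * x + b k))
              - c k * (INR 1 * t ^ pred 1 * dtanh 1 (t * x + b k)
                       + t ^ 1 * x * dtanh 2 (t * x + b k)))
    (Rabs (cp k) * (INR 1 * Rabs (w k) ^ pred 1 * 2 + Rabs (w k) ^ 1 * 8 * 2))
    (Rabs (cp k) * (INR 0 * Rabs (w k) ^ pred 0 * 2 + Rabs (w k) ^ 0 * 8 * 2)
     + Rabs (c k) * (INR 1 * Rabs (w k) ^ pred 1 * 2 + Rabs (w k) ^ 1 * 8 * 2)))].
  - rewrite upd_same. simpl.
    pose proof (Rmax_l (Rabs (c k)) (Rabs (cp k))) as HcM.
    pose proof (Rmax_r (Rabs (c k)) (Rabs (cp k))) as HcpM.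
    pose proof (Rmax_l (Rabs (w k)) 1) as Hwmx. pose proof (Rmax_r (Rabs (w k)) 1) as H1mx.
    pose proof (Rabs_pos (c k)). pose proof (Rabs_pos (cp k)). pose proof (Rabs_pos (w k)).
    pose proof (Tconst_nonneg K a c w cp).
    set (M := Rmax (Rabs (c k)) (Rabs (cp k))) in *. set (mx := Rmax (Rabs (w k)) 1) in *.
    assert (HB : Rabs (cp k) * (1 * 1 * 2 + Rabs (w k) * 1 * 8 * 2) +
                 (Rabs (cp k) * (0 * 1 * 2 + 1 * 8 * 2) +
                  Rabs (c k) * (1 * 1 * 2 + Rabs (w k) * 1 * 8 * 2)) <= 52 * M * mx) by nra.
    apply Rle_trans with (4 * Tconst K a c w cp * (52 * M * mx)); [|right; ring].
    apply Rmult_le_compat_l; [lra|exact HB].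
  - intros t x. apply is_derive_uhatD_w; [lia|exact Hk].
  - intros t x. apply (is_derive_minus (fun s => uhatD 0 K cp (upd w k s) b x)
      (fun s => uhatD 1 K c (upd w k s) b x)); apply is_derive_uhatD_w; (lia || exact Hk).
  - intros t x. solve_continuity_2d.
  - intros t x. solve_continuity_2d.
  - intros t x. solve_continuity_2d.
  - intros t x. solve_continuity_2d.
  - intros x Hx. apply Rabs_neuron_dw_le, Hx.
  - intros x Hx. unfold Rminus. eapply Rle_trans; [apply Rabs_triang|]. rewrite Rabs_Ropp.
    apply Rplus_le_compat; apply Rabs_neuron_dw_le, Hx.
Qed.

Lemma dbound_LFt_b K a c w b cp k : (k < K)%nat ->
  dbound (fun t => LFt K a c w (upd b k t) cp) (b k)
    (24 * Tconst K a c w cp * Rmax (Rabs (c k)) (Rabs (cp k)) * Rmax (Rabs (w k)) 1).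
Proof.
  intros Hk.
  eapply dbound_le; [|apply (dbound_LFt_path K a (fun _ => c) (fun _ => w) (upd b k) (fun _ => cp)
    (b k) (fun t x => cp k * w k ^ 1 * dtanh 2 (w k * x + t))
    (fun t x => cp k * w k ^ 0 * dtanh 1 (w k * x + t) - c k * w k ^ 1 * dtanh 2 (w k * x + t))
    (Rabs (cp k) * (Rabs (w k) ^ 1 * 2))
    (Rabs (cp k) * (Rabs (w k) ^ 0 * 2) + Rabs (c k) * (Rabs (w k) ^ 1 * 2)))].
  - simpl.
    pose proof (Rmax_l (Rabs (c k)) (Rabs (cp k))) as HcM.
    pose proof (Rmax_r (Rabs (c k)) (Rabs (cp k))) as HcpM.
    pose proof (Rmax_l (Rabs (w k)) 1) as Hwmx. pose proof (Rmax_r (Rabs (w k)) 1) as H1mx.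
    pose proof (Rabs_pos (c k)). pose proof (Rabs_pos (cp k)). pose proof (Rabs_pos (w k)).
    pose proof (Tconst_nonneg K a c w cp).
    set (M := Rmax (Rabs (c k)) (Rabs (cp k))) in *. set (mx := Rmax (Rabs (w k)) 1) in *.
    assert (HB : Rabs (cp k) * (Rabs (w k) * 1 * 2) +
                 (Rabs (cp k) * (1 * 2) + Rabs (c k) * (Rabs (w k) * 1 * 2)) <= 6 * M * mx) by nra.
    apply Rle_trans with (4 * Tconst K a c w cp * (6 * M * mx)); [|right; ring].
    apply Rmult_le_compat_l; [lra|exact HB].
  - intros t x. apply is_derive_uhatD_b; [lia|exact Hk].
  - intros t x. apply (is_derive_minus (fun s => uhatD 0 K cp w (upd b k s) x)
      (fun s => uhatD 1 K c w (upd b k s) x)); apply is_derive_uhatD_b; (lia || exact Hk).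
  - intros t x. solve_continuity_2d.
  - intros t x. solve_continuity_2d.
  - intros t x. solve_continuity_2d.
  - intros t x. solve_continuity_2d.
  - intros x _. apply Rabs_scaled_pow_dtanh_le.
  - intros x _. unfold Rminus. eapply Rle_trans; [apply Rabs_triang|]. rewrite Rabs_Ropp.
    apply Rplus_le_compat; apply Rabs_scaled_pow_dtanh_le.
Qed.

Lemma dbound_weaken F t0 c C X : 0 < c <= C -> dbound F t0 (c * X) -> dbound F t0 (C * X).
Proof.
  intros Hc [Hex HB]. split; [exact Hex|].
  assert (HX : 0 <= X).
  { apply Rmult_le_reg_l with c; [lra|]. rewrite Rmult_0_r.
    eapply Rle_trans; [apply Rabs_pos|exact HB]. }
  eapply Rle_trans; [exact HB|]. apply Rmult_le_compat_r; lra.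
Qed.

Theorem theorem4p1 :
  exists C : R, 0 < C /\
  forall (K : nat) (a : R) (c w b cp : nat -> R) (k : nat),
    (1 <= K)%nat -> (k < K)%nat ->
    let S := Sconst K a c w in
    let T := Tconst K a c w cp in
    let M := Rmax (Rabs (c k)) (Rabs (cp k)) in
    dbound (fun t => LF K a (upd c k t) w b) (c k) (C * S * w k ^ 2) /\
    dbound (fun t => LF K a c (upd w k t) b) (w k)
           (C * S * Rabs (c k) * Rabs (w k) * (Rabs (w k) + 1)) /\
    dbound (fun t => LF K a c w (upd b k t)) (b k) (C * S * Rabs (c k) * w k ^ 2) /\
    dbound (fun t => LFt K a (upd c k t) w b cp) (c k) (C * T * Rabs (w k)) /\
    dbound (fun t => LFt K a c (upd w k t) b cp) (w k)
           (C * T * M * Rmax (Rabs (w k)) 1) /\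
    dbound (fun t => LFt K a c w (upd b k t) cp) (b k)
           (C * T * M * Rmax (Rabs (w k)) 1) /\
    dbound (fun t => LFt K a c w b (upd cp k t)) (cp k)
           (C * T * Rmax (Rabs (w k)) 1).
Proof.
  exists 256. split; [lra|].
  (* Reassociating puts every bound in
     the form [256 * X], to be weakened from the constant of the matching lemma. *)
  intros K a c w b cp k _ Hk. cbv zeta. rewrite !Rmult_assoc.
  split; [|split; [|split; [|split; [|split; [|split]]]]].
  - eapply dbound_weaken; [|rewrite <- !Rmult_assoc; apply dbound_LF_c, Hk]; lra.
  - eapply dbound_weaken; [|rewrite <- !Rmult_assoc; apply dbound_LF_w, Hk]; lra.
  - eapply dbound_weaken; [|rewrite <- !Rmult_assoc; apply dbound_LF_b, Hk]; lra.
  - eapply dbound_weaken; [|rewrite <- !Rmult_assoc; apply dbound_LFt_c, Hk]; lra.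
  - eapply dbound_weaken; [|rewrite <- !Rmult_assoc; apply dbound_LFt_w, Hk]; lra.
  - eapply dbound_weaken; [|rewrite <- !Rmult_assoc; apply dbound_LFt_b, Hk]; lra.
  - eapply dbound_weaken; [|rewrite <- !Rmult_assoc; apply dbound_LFt_cp, Hk]; lra.
Qed.
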